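(* In the tracking setting, fix $k\geq0$. If $$\|s_{k+1}-s_k\|_2<\min\Big\{r_A,\ r_B,\ \frac{q_B\rho}{\lambda_A\lambda_F}\Big\}\quad\text{and}\quad \|\bar w_k-w^\ast_k\|_2<q_B\rho,$$ then $$\|w^\infty_k-w^\ast_{k+1}\|_2\leq\frac{\lambda_B\lambda_H}{\rho}\Big(\|\bar w_k-w^\ast_k\|_2+\lambda_A\lambda_F\|s_{k+1}-s_k\|_2\Big).$$
   Context: Problem data: $z=(z_1,\dots,z_P)\in\mathbb{R}^{n_z}$; $\mathcal{Z}=\mathcal{Z}_1\times\cdots\times\mathcal{Z}_P$ a product of nonempty bounded boxes; $J(z)=\sum_iJ_i(z_i)$ with polynomials $J_i$; polynomial maps $Q_c:\mathbb{R}^{n_z}\to\mathbb{R}^m$, $g_i:\mathbb{R}^{n_i}\to\mathbb{R}^{q_i}$; $T_i\in\mathbb{R}^{q_i\times p}$; $q=\sum q_i$; $\mathcal{S}\subseteq\mathbb{R}^p$; $G(z,s)=(Q_c(z),g_1(z_1)+T_1s,\dots,g_P(z_P)+T_Ps)$; $L_\rho(z,\mu,s)=J(z)+(\mu+\frac\rho2G(z,s))^\top G(z,s)$; for $w=(z,\mu)$, $F(w,s)=(\nabla J(z)+\nabla_zG(z,s)^\top\mu,\ G(z,s))$; $\mathcal{N}:=\mathcal{N}_{\mathcal{Z}\times\mathbb{R}^{m+q}}$. A KKT point of $(P_s)$: $\min J(z)$ s.t. $G(z,s)=0$, $z\in\mathcal{Z}$, is $w$ with $0\in F(w,s)+\mathcal{N}(w)$.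 For a reference multiplier $\tilde\mu$: $H^{\tilde\mu}_\rho(w,d,s):=(\nabla J(z)+\nabla_zG(z,s)^\top\mu,\ G(z,s)+d+(\tilde\mu-\mu)/\rho)$. Constants: $\lambda_F:=P\max_i\|T_i\|_2$ (so $\|F(w,s)-F(w,s')\|\le\lambda_F\|s-s'\|$); $\lambda_H>0$ with $\|H^{\tilde\mu}_\rho(w,d,s)-H^{\tilde\mu}_\rho(w,d',s')\|\le\lambda_H\|(d,s)-(d',s')\|$ for all arguments; $\lambda_G>0$ a Lipschitz constant of $z\mapsto G(z,s)$ on $\mathcal{Z}$ (independent of $s$). Primal sweep on $L_\rho(\cdot,\mu,s)$: block-coordinate projected-gradient pass over $i=1,\dots,P$ in order, each block update $z_i\leftarrow\pi_{\mathcal{Z}_i}(z_i-\frac1{c_i}\nabla_{z_i}L_\rho)$ (gradient evaluated with already updated preceding blocks) with curvature $c_i$ obtained by backtracking (multiply by $\beta>1$ from an initial $c_i^0>0$) until $f(u)+\frac{\alpha_i}2\|u-z_i\|^2\le f(z_i)+\nabla f(z_i)^\top(u-z_i)+\frac{c_i}2\|u-z_i\|^2$ for the block function $f$, with $\alpha_i>0$. Tracking setting: fix $\rho>0$, $M\ge1$. Given parameters $(s_k)_{k\ge0}\subset\mathcal{S}$ and KKT points $w^\ast_k=(z^\ast_k,\mu^\ast_k)$ of $(P_{s_k})$. Iterates $\bar w_k=(\bar z_k,\bar\mu_k)$ with $\bar z_k\in\mathcal{Z}$ are produced by: $\bar z_{k+1}$ = result of $M$ successive primal sweeps on $L_\rho(\cdot,\bar\mu_k,s_{k+1})$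 started at $\bar z_k$; $\bar\mu_{k+1}=\bar\mu_k+\rho G(\bar z_{k+1},s_{k+1})$. Let $z^\infty_k$ be the limit of infinitely many sweeps on $L_\rho(\cdot,\bar\mu_k,s_{k+1})$ started at $\bar z_k$, and $w^\infty_k:=(z^\infty_k,\ \bar\mu_k+\rho G(z^\infty_k,s_{k+1}))$; $d_k:=(\bar\mu_k-\mu^\ast_k)/\rho$. Standing hypotheses, for every $k$: (A) there are constants $r_A,\delta_A,\lambda_A>0$ (independent of $k$) such that for every $s\in\mathcal{B}(s_k,r_A)\cap\mathcal{S}$ there is a unique $w^\ast(s)\in\mathcal{B}(w^\ast_k,\delta_A)$ with $0\in F(w^\ast(s),s)+\mathcal{N}(w^\ast(s))$, for all $s,s'\in\mathcal{B}(s_k,r_A)\cap\mathcal{S}$ one has $\|w^\ast(s)-w^\ast(s')\|\le\lambda_A\|F(w^\ast(s'),s)-F(w^\ast(s'),s')\|$, and $w^\ast_{k+1}=w^\ast(s_{k+1})$ whenever $\|s_{k+1}-s_k\|<r_A$; (B) there are constants $r_B,q_B,\lambda_B>0$ and $\delta_B\ge\delta_A$ (independent of $k$) such that for all $d\in\mathcal{B}(0,q_B)$, $s\in\mathcal{B}(s_k,r_B)\cap\mathcal{S}$ there is a unique $w^\ast_k(d,s)\in\mathcal{B}(w^\ast_k,\delta_B)$ with $0\in H^{\mu^\ast_k}_\rho(w^\ast_k(d,s),d,s)+\mathcal{N}(w^\ast_k(d,s))$, and $\|w^\ast_k(d,s)-w^\ast_k(d',s')\|\le\lambda_B\|H^{\mu^\ast_k}_\rho(w^\ast_k(d',s'),d,s)-H^{\mu^\ast_k}_\rho(w^\ast_k(d',s'),d',s')\|$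 for all such $d,d',s,s'$; (C) there are constants $C>0$, $\delta>0$, $\psi>0$ (independent of $k$) such that the sequence of sweeps defining $z^\infty_k$ converges, $w^\infty_k=w^\ast_k(d_k,s_{k+1})$ whenever $d_k\in\mathcal{B}(0,q_B)$ and $\|s_{k+1}-s_k\|<r_B$, and if $\|\bar z_k-z^\infty_k\|<\delta$ then $\|\bar z_{k+1}-z^\infty_k\|\le CM^{-\psi}\|\bar z_k-z^\infty_k\|$. (In the paper, $\psi=\psi(d_L,n_z)=1/(d_L(3d_L-3)^{n_z-1}-2)$ with $d_L$ the degree of the augmented Lagrangian.) *)

From Stdlib Require Import Reals ClassicalEpsilon.
From mathcomp Require Import ssreflect ssrfun ssrbool eqtype ssrnat seq fintype.
Open Scope R_scope.

Definition vec (n : nat) : Type := 'I_n -> R.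
Definition sumI (n : nat) (f : 'I_n -> R) : R := foldr Rplus 0 (map f (enum 'I_n)).
Definition vzero (n : nat) : vec n := fun _ => 0.
Definition vadd {n} (x y : vec n) : vec n := fun i => x i + y i.
Definition vsub {n} (x y : vec n) : vec n := fun i => x i - y i.
Definition vscale {n} (a : R) (x : vec n) : vec n := fun i => a * x i.
Definition vdot {n} (x y : vec n) : R := sumI n (fun i => x i * y i).
Definition vnorm {n} (x : vec n) : R := sqrt (vdot x x).
Definition ebasis {n} (j : 'I_n) : vec n := fun c => if c == j then 1 else 0.
Definition matvec {a b} (A : 'I_a -> 'I_b -> R) (s : vec b) : vec a :=
  fun r => sumI b (fun j => A r j * s j).

(* the derivative of f at x (meaningful when f is differentiable at x) *)
Definition deriv_at (f : R -> R) (x : R) : R :=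
  epsilon (inhabits 0) (fun l => derivable_pt_lim f x l).
Definition grad {n} (f : vec n -> R) (x : vec n) : vec n :=
  fun j => deriv_at (fun t => f (vadd x (vscale t (ebasis j)))) 0.

Inductive is_poly {n} (S : 'I_n -> Prop) : (vec n -> R) -> Prop :=
| poly_const (c : R) : is_poly S (fun _ => c)
| poly_coord (j : 'I_n) : S j -> is_poly S (fun x => x j)
| poly_add f g : is_poly S f -> is_poly S g -> is_poly S (fun x => f x + g x)
| poly_mul f g : is_poly S f -> is_poly S g -> is_poly S (fun x => f x * g x).

(* z in R^nz is split into P contiguous blocks z_1..z_P: coordinate c belongs
   to block (blk c) (blocks numbered 0..P-1). The block functions J_i, g_i are
   represented as functions of z that are polynomials in the block-i
   coordinates only.  Z_i are boxes [lo,hi] restricted to block i. *)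
Record problem := Problem {
  nP : nat;
  nz : nat;
  blk : 'I_nz -> nat;
  nm : nat;
  qd : nat -> nat;
  np : nat;
  Jb : nat -> vec nz -> R;
  Qc : vec nz -> vec nm;
  gb : forall i : nat, vec nz -> vec (qd i);
  Tb : forall i : nat, 'I_(qd i) -> 'I_np -> R;
  lo : vec nz; hi : vec nz;
  Sset : vec np -> Prop
}.

Definition wf_problem (pb : problem) : Prop :=
  (forall c, (blk pb c < nP pb)%N) /\
  (forall c c' : 'I_(nz pb), (nat_of_ord c <= nat_of_ord c')%N -> (blk pb c <= blk pb c')%N) /\
  (forall c, lo pb c <= hi pb c) /\
  (forall i, (i < nP pb)%N -> is_poly (fun c => blk pb c = i) (Jb pb i)) /\
  (forall l, is_poly (fun _ => True) (fun z => Qc pb z l)) /\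
  (forall i (r : 'I_(qd pb i)), (i < nP pb)%N ->
      is_poly (fun c => blk pb c = i) (fun z => gb pb i z r)).

Section Prob.
Variable pb : problem.
Local Notation NZ := (nz pb).
Local Notation NP := (nP pb).
Local Notation NM := (nm pb).

(* multipliers mu in R^{m+q} = R^m x R^{q_1} x ... x R^{q_P} *)
Definition Mu : Type := (vec NM * (forall i : 'I_NP, vec (qd pb i)))%type.
Definition mu_zero : Mu := (vzero _, fun i => vzero _).
Definition mu_add (a b : Mu) : Mu := (vadd a.1 b.1, fun i => vadd (a.2 i) (b.2 i)).
Definition mu_sub (a b : Mu) : Mu := (vsub a.1 b.1, fun i => vsub (a.2 i) (b.2 i)).
Definition mu_scale (t : R) (a : Mu) : Mu := (vscale t a.1, fun i => vscale t (a.2 i)).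
Definition mu_dot (a b : Mu) : R := vdot a.1 b.1 + sumI NP (fun i => vdot (a.2 i) (b.2 i)).
Definition mu_norm (a : Mu) : R := sqrt (mu_dot a a).

Definition W : Type := (vec NZ * Mu)%type.
Definition w_zero : W := (vzero _, mu_zero).
Definition w_add (a b : W) : W := (vadd a.1 b.1, mu_add a.2 b.2).
Definition w_sub (a b : W) : W := (vsub a.1 b.1, mu_sub a.2 b.2).
Definition w_dot (a b : W) : R := vdot a.1 b.1 + mu_dot a.2 b.2.
Definition w_norm (a : W) : R := sqrt (w_dot a a).

Definition Jtot (z : vec NZ) : R := sumI NP (fun i => Jb pb i z).
Definition Gmap (z : vec NZ) (s : vec (np pb)) : Mu :=
  (Qc pb z, fun i : 'I_NP => vadd (gb pb i z) (matvec (Tb pb i) s)).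
(* nabla_z G(z,s)^T mu *)
Definition jacT (z : vec NZ) (s : vec (np pb)) (mu : Mu) : vec NZ :=
  fun c => sumI NM (fun l => mu.1 l * grad (fun y => (Gmap y s).1 l) z c)
         + sumI NP (fun i => sumI (qd pb i)
                     (fun r => mu.2 i r * grad (fun y => (Gmap y s).2 i r) z c)).
Definition Fmap (w : W) (s : vec (np pb)) : W :=
  (vadd (grad Jtot w.1) (jacT w.1 s w.2), Gmap w.1 s).
Definition Hmap (rho : R) (mut : Mu) (w : W) (d : Mu) (s : vec (np pb)) : W :=
  (vadd (grad Jtot w.1) (jacT w.1 s w.2),
   mu_add (mu_add (Gmap w.1 s) d) (mu_scale (/ rho) (mu_sub mut w.2))).
Definition Lrho (rho : R) (mu : Mu) (s : vec (np pb)) (z : vec NZ) : R :=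
  Jtot z + mu_dot (mu_add mu (mu_scale (rho / 2) (Gmap z s))) (Gmap z s).

Definition Zset (z : vec NZ) : Prop := forall c, lo pb c <= z c <= hi pb c.
Definition Wset (w : W) : Prop := Zset w.1.
(* v in N_{Z x R^{m+q}}(w) (empty if w is not in the set) *)
Definition normal_cone (w v : W) : Prop :=
  Wset w /\ forall w', Wset w' -> w_dot v (w_sub w' w) <= 0.
Definition GE (Phi : W) (w : W) : Prop :=
  exists v, normal_cone w v /\ w_add Phi v = w_zero.
Definition KKT (w : W) (s : vec (np pb)) : Prop := GE (Fmap w s) w.

Section Sweep.
Variables (c0 : nat -> R) (beta : R) (alpha : nat -> R).

Definition bdot (i : nat) (x y : vec NZ) : R :=
  sumI NZ (fun c => if blk pb c == i then x c * y c else 0).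
Definition block_trial (f : vec NZ -> R) (i : nat) (z : vec NZ) (cc : R) : vec NZ :=
  fun c => if blk pb c == i
           then Rmax (lo pb c) (Rmin (hi pb c) (z c - / cc * grad f z c))
           else z c.
Definition armijo (f : vec NZ -> R) (i : nat) (z u : vec NZ) (cc : R) : Prop :=
  f u + alpha i / 2 * bdot i (vsub u z) (vsub u z)
  <= f z + bdot i (grad f z) (vsub u z) + cc / 2 * bdot i (vsub u z) (vsub u z).
Definition block_step (f : vec NZ -> R) (i : nat) (z z' : vec NZ) : Prop :=
  exists j : nat,
    armijo f i z (block_trial f i z (c0 i * beta ^ j)) (c0 i * beta ^ j) /\
    (forall j' : nat, (j' < j)%N ->
       ~ armijo f i z (block_trial f i z (c0 i * beta ^ j')) (c0 i * beta ^ j')) /\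
    z' = block_trial f i z (c0 i * beta ^ j).
Definition sweep (f : vec NZ -> R) (z z' : vec NZ) : Prop :=
  exists zs : nat -> vec NZ, zs 0%N = z /\
    (forall i, (i < NP)%N -> block_step f i (zs i) (zs i.+1)) /\ z' = zs NP.
Definition msweep (M : nat) (f : vec NZ -> R) (z z' : vec NZ) : Prop :=
  exists zs : nat -> vec NZ, zs 0%N = z /\
    (forall t, (t < M)%N -> sweep f (zs t) (zs t.+1)) /\ z' = zs M.
Definition sweep_limit (f : vec NZ -> R) (z zinf : vec NZ) : Prop :=
  exists zs : nat -> vec NZ, zs 0%N = z /\
    (forall t, sweep f (zs t) (zs t.+1)) /\
    Un_cv (fun t => vnorm (vsub (zs t) zinf)) 0.
End Sweep.

Definition winf (rho : R) (s : nat -> vec (np pb)) (wbar : nat -> W)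
  (zinf : nat -> vec NZ) (k : nat) : W :=
  (zinf k, mu_add (wbar k).2 (mu_scale rho (Gmap (zinf k) (s k.+1)))).
Definition dk (rho : R) (wbar wstar : nat -> W) (k : nat) : Mu :=
  mu_scale (/ rho) (mu_sub (wbar k).2 (wstar k).2).

End Prob.

(* Both [w^infty_k] and [w*_{k+1}] are solutions of the perturbed generalized
   equation of hypothesis (B) at the parameter [s_{k+1}]: the former with the
   offset [d_k = (mubar_k - mu*_k)/rho], the latter with
   [e = (mu*_{k+1} - mu*_k)/rho], since [H^{mu*_k}(w, e, s) = F(w, s)] for
   [w = w*_{k+1}].  The Lipschitz property of (B) together with [lambda_H]
   bounds their distance by [lambda_B lambda_H ||d_k - e||], and
   [rho (d_k - e) = mubar_k - mu*_{k+1}], whose norm is at most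
   [||wbar_k - w*_k|| + ||w*_{k+1} - w*_k||]; the last term is at most
   [lambda_A lambda_F ||s_{k+1} - s_k||] by the stability estimate of (A). *)
From Stdlib Require Import Reals ClassicalEpsilon.
From mathcomp Require Import ssreflect ssrfun ssrbool eqtype ssrnat seq fintype.
From Stdlib Require Import Lra Psatz FunctionalExtensionality.
Open Scope R_scope.

Lemma sumI_add {n} (f g : 'I_n -> R) :
  sumI n (fun i => f i + g i) = sumI n f + sumI n g.
Proof. rewrite /sumI; elim: (enum 'I_n) => [|a l IH] /=; [lra | rewrite IH; lra]. Qed.

Lemma sumI_scale {n} (c : R) (f : 'I_n -> R) :
  sumI n (fun i => c * f i) = c * sumI n f.
Proof. rewrite /sumI; elim: (enum 'I_n) => [|a l IH] /=; [lra | rewrite IH; lra]. Qed.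

Lemma sumI_ge0 {n} (f : 'I_n -> R) : (forall i, 0 <= f i) -> 0 <= sumI n f.
Proof.
move=> f_ge0; rewrite /sumI; elim: (enum 'I_n) => [|a l IH] /=; first lra.
by have := f_ge0 a; lra.
Qed.

Lemma vdot_addl {n} (x y z : vec n) : vdot (vadd x y) z = vdot x z + vdot y z.
Proof.
rewrite /vdot -sumI_add; congr sumI.
by apply: functional_extensionality => i; rewrite /vadd; ring.
Qed.

Lemma vdot_scalel {n} t (x z : vec n) : vdot (vscale t x) z = t * vdot x z.
Proof.
rewrite /vdot -sumI_scale; congr sumI.
by apply: functional_extensionality => i; rewrite /vscale; ring.
Qed.

Lemma vdotC {n} (x z : vec n) : vdot x z = vdot z x.
Proof. by rewrite /vdot; congr sumI; apply: functional_extensionality => i; ring. Qed.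

Lemma vdot_ge0 {n} (x : vec n) : 0 <= vdot x x.
Proof. by apply: sumI_ge0 => i; nra. Qed.

Lemma vnorm_sub_diag {n} (x : vec n) : vnorm (vsub x x) = 0.
Proof.
have -> : vsub x x = vscale 0 x.
  by apply: functional_extensionality => c; rewrite /vsub /vscale; ring.
by rewrite /vnorm vdot_scalel Rmult_0_l sqrt_0.
Qed.

Lemma quadratic_ge0_discriminant (aa ab bb : R) : 0 <= bb ->
  (forall t, 0 <= aa + 2 * t * ab + t * t * bb) -> ab * ab <= aa * bb.
Proof.
move=> bb_ge0 q_ge0; case: (Req_dec bb 0) => [bb0 | bb_neq0].
- case: (Req_dec ab 0) => [-> | ab_neq0]; first by have := q_ge0 0; nra.
  have := q_ge0 (- (aa + 1) / (2 * ab)); rewrite bb0.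
  have -> : aa + 2 * (- (aa + 1) / (2 * ab)) * ab
            + - (aa + 1) / (2 * ab) * (- (aa + 1) / (2 * ab)) * 0 = -1 by field.
  lra.
- have := q_ge0 (- ab / bb).
  have -> : aa + 2 * (- ab / bb) * ab + - ab / bb * (- ab / bb) * bb
            = (aa * bb - ab * ab) / bb by field.
  move=> /(Rmult_le_compat_r bb _ _ bb_ge0).
  by rewrite Rmult_0_l /Rdiv Rmult_assoc Rinv_l // Rmult_1_r; lra.
Qed.

(* The triangle inequality for the norm of any positive semidefinite
   symmetric bilinear form, read off the quadratic [t |-> <x + t y, x + t y>]. *)
Lemma sqrt_quadratic_triangle (aa ab bb : R) : 0 <= aa -> 0 <= bb ->
  (forall t, 0 <= aa + 2 * t * ab + t * t * bb) ->
  sqrt (aa + 2 * ab + bb) <= sqrt aa + sqrt bb.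
Proof.
move=> aa_ge0 bb_ge0 q_ge0.
have disc := quadratic_ge0_discriminant _ _ _ bb_ge0 q_ge0.
have ab_le : ab <= sqrt aa * sqrt bb.
  apply: Rle_trans (Rle_abs ab) _; rewrite -sqrt_mult // -sqrt_Rsqr_abs.
  by apply: sqrt_le_1_alt; rewrite /Rsqr.
have := sqrt_pos aa; have := sqrt_pos bb.
have := sqrt_sqrt _ aa_ge0; have := sqrt_sqrt _ bb_ge0 => Hb Ha sb sa.
rewrite -(sqrt_pow2 (sqrt aa + sqrt bb)); last lra.
by apply: sqrt_le_1_alt; nra.
Qed.

Section MultiplierSpace.
Context {pb : problem}.

Lemma mu_ext (a b : Mu pb) :
  (forall l, a.1 l = b.1 l) -> (forall i r, a.2 i r = b.2 i r) -> a = b.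
Proof.
case: a b => [a1 a2] [b1 b2] /= eq1 eq2.
have -> : a1 = b1 by apply: functional_extensionality.
have -> // : a2 = b2.
by apply: functional_extensionality_dep => i; apply: functional_extensionality.
Qed.

Lemma mu_dot_addl (x y z : Mu pb) :
  mu_dot pb (mu_add pb x y) z = mu_dot pb x z + mu_dot pb y z.
Proof.
rewrite /mu_dot /= vdot_addl.
have -> : (fun i => vdot (vadd (x.2 i) (y.2 i)) (z.2 i))
          = (fun i => vdot (x.2 i) (z.2 i) + vdot (y.2 i) (z.2 i)).
  by apply: functional_extensionality => i; rewrite vdot_addl.
rewrite sumI_add; ring.
Qed.

Lemma mu_dot_scalel t (x z : Mu pb) : mu_dot pb (mu_scale pb t x) z = t * mu_dot pb x z.
Proof.
rewrite /mu_dot /= vdot_scalel.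
have -> : (fun i => vdot (vscale t (x.2 i)) (z.2 i)) = (fun i => t * vdot (x.2 i) (z.2 i)).
  by apply: functional_extensionality => i; rewrite vdot_scalel.
rewrite sumI_scale; ring.
Qed.

Lemma mu_dotC (x z : Mu pb) : mu_dot pb x z = mu_dot pb z x.
Proof.
rewrite /mu_dot vdotC; congr (_ + sumI _ _).
by apply: functional_extensionality => i; rewrite vdotC.
Qed.

Lemma mu_dot_ge0 (x : Mu pb) : 0 <= mu_dot pb x x.
Proof.
have := vdot_ge0 x.1; have := @sumI_ge0 _ (fun i => vdot (x.2 i) (x.2 i)) (fun i => vdot_ge0 (x.2 i)).
by rewrite /mu_dot; lra.
Qed.

Lemma mu_norm_ge0 (x : Mu pb) : 0 <= mu_norm pb x.
Proof. exact: sqrt_pos. Qed.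

Lemma mu_norm_scale t (x : Mu pb) : mu_norm pb (mu_scale pb t x) = Rabs t * mu_norm pb x.
Proof.
rewrite /mu_norm mu_dot_scalel mu_dotC mu_dot_scalel -Rmult_assoc.
by rewrite sqrt_mult ?sqrt_Rsqr_abs //; [nra | exact: mu_dot_ge0].
Qed.

Lemma mu_norm_triangle (x y : Mu pb) :
  mu_norm pb (mu_add pb x y) <= mu_norm pb x + mu_norm pb y.
Proof.
have expand t : mu_dot pb (mu_add pb x (mu_scale pb t y)) (mu_add pb x (mu_scale pb t y))
    = mu_dot pb x x + 2 * t * mu_dot pb x y + t * t * mu_dot pb y y.
  rewrite !mu_dot_addl !(mu_dotC _ (mu_add _ _ _)) !mu_dot_addl !mu_dot_scalel.
  rewrite !(mu_dotC _ (mu_scale _ _ _)) !mu_dot_scalel (mu_dotC y x); ring.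
have -> : mu_add pb x y = mu_add pb x (mu_scale pb 1 y).
  by apply: mu_ext => *; rewrite /= /vadd /vscale; ring.
rewrite /mu_norm expand !Rmult_1_r !Rmult_1_l.
apply: sqrt_quadratic_triangle; try exact: mu_dot_ge0.
by move=> t; rewrite -expand; exact: mu_dot_ge0.
Qed.

Lemma mu_norm_sub_triangle (a b c : Mu pb) :
  mu_norm pb (mu_sub pb a c) <= mu_norm pb (mu_sub pb a b) + mu_norm pb (mu_sub pb b c).
Proof.
have -> : mu_sub pb a c = mu_add pb (mu_sub pb a b) (mu_sub pb b c).
  by apply: mu_ext => *; rewrite /= /vsub /vadd; ring.
exact: mu_norm_triangle.
Qed.

Lemma mu_norm_subC (x y : Mu pb) : mu_norm pb (mu_sub pb x y) = mu_norm pb (mu_sub pb y x).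
Proof.
have -> : mu_sub pb x y = mu_scale pb (-1) (mu_sub pb y x).
  by apply: mu_ext => *; rewrite /= /vsub /vscale; ring.
by rewrite mu_norm_scale Rabs_Ropp Rabs_R1 Rmult_1_l.
Qed.

Lemma mu_norm_snd_le_w_norm (w : W pb) : mu_norm pb w.2 <= w_norm pb w.
Proof. by apply: sqrt_le_1_alt; rewrite /w_dot; have := vdot_ge0 w.1; lra. Qed.

Lemma w_norm_sub_diag (x : W pb) : w_norm pb (w_sub pb x x) = 0.
Proof.
rewrite /w_norm /w_dot /=.
have -> : mu_sub pb x.2 x.2 = mu_scale pb 0 x.2.
  by apply: mu_ext => *; rewrite /= /vsub /vscale; ring.
have -> : vsub x.1 x.1 = vscale 0 x.1.
  by apply: functional_extensionality => c; rewrite /vsub /vscale; ring.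
by rewrite mu_dot_scalel vdot_scalel !Rmult_0_l Rplus_0_r sqrt_0.
Qed.

Definition dual_offset (rho : R) (w wref : W pb) : Mu pb :=
  mu_scale pb (/ rho) (mu_sub pb w.2 wref.2).

Lemma Hmap_dual_offset rho (w wref : W pb) s : rho <> 0 ->
  Hmap pb rho wref.2 w (dual_offset rho w wref) s = Fmap pb w s.
Proof.
move=> rho_neq0; rewrite /Hmap /Fmap; congr pair.
by apply: mu_ext => *; rewrite /= /vadd /vsub /vscale; field.
Qed.

Lemma mu_norm_dual_offset rho (w wref : W pb) : 0 < rho ->
  mu_norm pb (dual_offset rho w wref) = / rho * mu_norm pb (mu_sub pb w.2 wref.2).
Proof.
by move=> rho_gt0; rewrite mu_norm_scale Rabs_right //; apply/Rle_ge/Rlt_le/Rinv_0_lt_compat.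
Qed.

Lemma mu_norm_dual_offset_lt {rho q : R} {w wref : W pb} : 0 < rho ->
  w_norm pb (w_sub pb w wref) < q * rho -> mu_norm pb (dual_offset rho w wref) < q.
Proof.
move=> rho_gt0 w_near; rewrite mu_norm_dual_offset //.
have := mu_norm_snd_le_w_norm (w_sub pb w wref) => /= mu_le.
apply: (Rmult_lt_reg_l rho) => //; rewrite -Rmult_assoc Rinv_r; lra.
Qed.

Lemma dual_offset_sub rho (a b c : W pb) :
  mu_sub pb (dual_offset rho a c) (dual_offset rho b c) = dual_offset rho a b.
Proof. by apply: mu_ext => *; rewrite /= /vsub /vscale; ring. Qed.

End MultiplierSpace.

Section RegularityA.
Context {pb : problem} {s : nat -> vec (np pb)} {wstar : nat -> W pb}.
Context {lamF rA deltaA lamA : R} {wA : nat -> vec (np pb) -> W pb}.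
Hypothesis HsS : forall k, Sset pb (s k).
Hypothesis Hwstar : forall k, KKT pb (wstar k) (s k).
Hypothesis HlamF : forall (w : W pb) (s1 s2 : vec (np pb)),
  w_norm pb (w_sub pb (Fmap pb w s1) (Fmap pb w s2)) <= lamF * vnorm (vsub s1 s2).
Hypothesis HrA : 0 < rA.
Hypothesis HlamA : 0 < lamA.
Hypothesis HA1 : forall k (s1 : vec (np pb)), Sset pb s1 -> vnorm (vsub s1 (s k)) < rA ->
  w_norm pb (w_sub pb (wA k s1) (wstar k)) < deltaA /\ KKT pb (wA k s1) s1 /\
  (forall w : W pb, w_norm pb (w_sub pb w (wstar k)) < deltaA -> KKT pb w s1 ->
                    w = wA k s1).
Hypothesis HA2 : forall k (s1 s2 : vec (np pb)),
  Sset pb s1 -> vnorm (vsub s1 (s k)) < rA ->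
  Sset pb s2 -> vnorm (vsub s2 (s k)) < rA ->
  w_norm pb (w_sub pb (wA k s1) (wA k s2))
  <= lamA * w_norm pb (w_sub pb (Fmap pb (wA k s2) s1) (Fmap pb (wA k s2) s2)).
Hypothesis HA3 : forall k, vnorm (vsub (s k.+1) (s k)) < rA -> wstar k.+1 = wA k (s k.+1).

Lemma wstar_eq_wA k : wstar k = wA k (s k).
Proof.
have s_near : vnorm (vsub (s k) (s k)) < rA by rewrite vnorm_sub_diag.
have [wA_near [_ unique]] := HA1 k _ (HsS k) s_near.
apply: unique (Hwstar k); rewrite w_norm_sub_diag.
exact: Rle_lt_trans (sqrt_pos _) wA_near.
Qed.

Lemma wstar_succ_near {k} : vnorm (vsub (s k.+1) (s k)) < rA ->
  w_norm pb (w_sub pb (wstar k.+1) (wstar k)) < deltaA.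
Proof. by move=> s_near; rewrite HA3 //; case: (HA1 k _ (HsS k.+1) s_near). Qed.

Lemma wstar_succ_sub_le {k} : vnorm (vsub (s k.+1) (s k)) < rA ->
  w_norm pb (w_sub pb (wstar k.+1) (wstar k))
  <= lamA * lamF * vnorm (vsub (s k.+1) (s k)).
Proof.
move=> s_near; rewrite HA3 // [X in w_sub _ _ X]wstar_eq_wA Rmult_assoc.
apply: Rle_trans (HA2 k _ _ (HsS _) s_near (HsS _) _) _.
  by rewrite vnorm_sub_diag.
by apply: Rmult_le_compat_l; [lra | exact: HlamF].
Qed.

End RegularityA.

Section RegularityB.
Context {pb : problem} {rho : R} {s : nat -> vec (np pb)} {wstar : nat -> W pb}.
Context {lamH rB qB lamB deltaB : R} {wB : nat -> Mu pb -> vec (np pb) -> W pb}.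
Hypothesis Hrho : 0 < rho.
Hypothesis HlamH : forall (mut : Mu pb) (w : W pb) (d1 d2 : Mu pb) (s1 s2 : vec (np pb)),
  w_norm pb (w_sub pb (Hmap pb rho mut w d1 s1) (Hmap pb rho mut w d2 s2))
  <= lamH * sqrt (mu_norm pb (mu_sub pb d1 d2) ^ 2 + vnorm (vsub s1 s2) ^ 2).
Hypothesis HlamB : 0 < lamB.
Hypothesis HB1 : forall k (d : Mu pb) (s1 : vec (np pb)),
  mu_norm pb d < qB -> Sset pb s1 -> vnorm (vsub s1 (s k)) < rB ->
  w_norm pb (w_sub pb (wB k d s1) (wstar k)) < deltaB /\
  GE pb (Hmap pb rho (wstar k).2 (wB k d s1) d s1) (wB k d s1) /\
  (forall w : W pb, w_norm pb (w_sub pb w (wstar k)) < deltaB ->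
                    GE pb (Hmap pb rho (wstar k).2 w d s1) w -> w = wB k d s1).
Hypothesis HB2 : forall k (d1 d2 : Mu pb) (s1 s2 : vec (np pb)),
  mu_norm pb d1 < qB -> Sset pb s1 -> vnorm (vsub s1 (s k)) < rB ->
  mu_norm pb d2 < qB -> Sset pb s2 -> vnorm (vsub s2 (s k)) < rB ->
  w_norm pb (w_sub pb (wB k d1 s1) (wB k d2 s2))
  <= lamB * w_norm pb (w_sub pb (Hmap pb rho (wstar k).2 (wB k d2 s2) d1 s1)
                                (Hmap pb rho (wstar k).2 (wB k d2 s2) d2 s2)).

(* A KKT point close to [wstar k] solves the perturbed equation of (B) with
   its own multiplier offset, so it is the solution selected by (B). *)
Lemma KKT_eq_wB {k} {w : W pb} {s1 : vec (np pb)} :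
  KKT pb w s1 -> Sset pb s1 -> vnorm (vsub s1 (s k)) < rB ->
  w_norm pb (w_sub pb w (wstar k)) < deltaB ->
  w_norm pb (w_sub pb w (wstar k)) < qB * rho ->
  w = wB k (dual_offset rho w (wstar k)) s1.
Proof.
move=> w_KKT s1_S s1_near w_near w_nearq.
have d_small := mu_norm_dual_offset_lt Hrho w_nearq.
have [_ [_ unique]] := HB1 k _ _ d_small s1_S s1_near.
by apply: unique; rewrite // Hmap_dual_offset //; lra.
Qed.

Lemma wB_sub_le {k} {d1 d2 : Mu pb} {s1 : vec (np pb)} :
  mu_norm pb d1 < qB -> mu_norm pb d2 < qB -> Sset pb s1 -> vnorm (vsub s1 (s k)) < rB ->
  w_norm pb (w_sub pb (wB k d1 s1) (wB k d2 s1)) <= lamB * lamH * mu_norm pb (mu_sub pb d1 d2).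
Proof.
move=> d1_small d2_small s1_S s1_near.
apply: Rle_trans (HB2 k _ _ _ _ d1_small s1_S s1_near d2_small s1_S s1_near) _.
rewrite Rmult_assoc; apply: Rmult_le_compat_l; first lra.
apply: Rle_trans (HlamH _ _ _ _ _ _) _.
rewrite vnorm_sub_diag; have -> : 0 ^ 2 = 0 by ring.
rewrite Rplus_0_r sqrt_pow2; [lra | exact: mu_norm_ge0].
Qed.

End RegularityB.

Theorem mainTheorem8
  (pb : problem) (Hwf : wf_problem pb)
  (* algorithm parameters *)
  (rho : R) (M : nat) (c0 alpha : nat -> R) (beta : R)
  (Hrho : 0 < rho) (HM : (1 <= M)%N)
  (Hc0 : forall i, (i < nP pb)%N -> 0 < c0 i) (Hbeta : 1 < beta)
  (Halpha : forall i, (i < nP pb)%N -> 0 < alpha i)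
  (* constants lambda_F, lambda_H, lambda_G *)
  (lamF lamH lamG : R)
  (HlamF : forall (w : W pb) (s1 s2 : vec (np pb)),
      w_norm pb (w_sub pb (Fmap pb w s1) (Fmap pb w s2)) <= lamF * vnorm (vsub s1 s2))
  (HlamH0 : 0 < lamH)
  (HlamH : forall (mut : Mu pb) (w : W pb) (d1 d2 : Mu pb) (s1 s2 : vec (np pb)),
      w_norm pb (w_sub pb (Hmap pb rho mut w d1 s1) (Hmap pb rho mut w d2 s2))
      <= lamH * sqrt (mu_norm pb (mu_sub pb d1 d2) ^ 2 + vnorm (vsub s1 s2) ^ 2))
  (HlamG0 : 0 < lamG)
  (HlamG : forall (s : vec (np pb)) (z1 z2 : vec (nz pb)),
      Zset pb z1 -> Zset pb z2 ->
      mu_norm pb (mu_sub pb (Gmap pb z1 s) (Gmap pb z2 s)) <= lamG * vnorm (vsub z1 z2))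
  (* tracking setting *)
  (s : nat -> vec (np pb)) (wstar wbar : nat -> W pb) (zinf : nat -> vec (nz pb))
  (HsS : forall k, Sset pb (s k))
  (Hwstar : forall k, KKT pb (wstar k) (s k))
  (HwbarZ : forall k, Zset pb (wbar k).1)
  (Hzbar : forall k, msweep pb c0 beta alpha M (Lrho pb rho (wbar k).2 (s k.+1))
                            (wbar k).1 (wbar k.+1).1)
  (Hmubar : forall k, (wbar k.+1).2 =
                      mu_add pb (wbar k).2 (mu_scale pb rho (Gmap pb (wbar k.+1).1 (s k.+1))))
  (* hypothesis (A) *)
  (rA deltaA lamA : R) (wA : nat -> vec (np pb) -> W pb)
  (HrA : 0 < rA) (HdeltaA : 0 < deltaA) (HlamA : 0 < lamA)
  (HA1 : forall k (s1 : vec (np pb)), Sset pb s1 -> vnorm (vsub s1 (s k)) < rA ->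
      w_norm pb (w_sub pb (wA k s1) (wstar k)) < deltaA /\ KKT pb (wA k s1) s1 /\
      (forall w : W pb, w_norm pb (w_sub pb w (wstar k)) < deltaA -> KKT pb w s1 ->
                        w = wA k s1))
  (HA2 : forall k (s1 s2 : vec (np pb)),
      Sset pb s1 -> vnorm (vsub s1 (s k)) < rA ->
      Sset pb s2 -> vnorm (vsub s2 (s k)) < rA ->
      w_norm pb (w_sub pb (wA k s1) (wA k s2))
      <= lamA * w_norm pb (w_sub pb (Fmap pb (wA k s2) s1) (Fmap pb (wA k s2) s2)))
  (HA3 : forall k, vnorm (vsub (s k.+1) (s k)) < rA -> wstar k.+1 = wA k (s k.+1))
  (* hypothesis (B) *)
  (rB qB lamB deltaB : R) (wB : nat -> Mu pb -> vec (np pb) -> W pb)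
  (HrB : 0 < rB) (HqB : 0 < qB) (HlamB : 0 < lamB) (HdeltaB : deltaA <= deltaB)
  (HB1 : forall k (d : Mu pb) (s1 : vec (np pb)),
      mu_norm pb d < qB -> Sset pb s1 -> vnorm (vsub s1 (s k)) < rB ->
      w_norm pb (w_sub pb (wB k d s1) (wstar k)) < deltaB /\
      GE pb (Hmap pb rho (wstar k).2 (wB k d s1) d s1) (wB k d s1) /\
      (forall w : W pb, w_norm pb (w_sub pb w (wstar k)) < deltaB ->
                        GE pb (Hmap pb rho (wstar k).2 w d s1) w -> w = wB k d s1))
  (HB2 : forall k (d1 d2 : Mu pb) (s1 s2 : vec (np pb)),
      mu_norm pb d1 < qB -> Sset pb s1 -> vnorm (vsub s1 (s k)) < rB ->
      mu_norm pb d2 < qB -> Sset pb s2 -> vnorm (vsub s2 (s k)) < rB ->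
      w_norm pb (w_sub pb (wB k d1 s1) (wB k d2 s2))
      <= lamB * w_norm pb (w_sub pb (Hmap pb rho (wstar k).2 (wB k d2 s2) d1 s1)
                                    (Hmap pb rho (wstar k).2 (wB k d2 s2) d2 s2)))
  (* hypothesis (C) *)
  (Cc delta psi : R) (HCc : 0 < Cc) (Hdelta : 0 < delta) (Hpsi : 0 < psi)
  (HC1 : forall k, sweep_limit pb c0 beta alpha (Lrho pb rho (wbar k).2 (s k.+1))
                               (wbar k).1 (zinf k))
  (HC2 : forall k, mu_norm pb (dk pb rho wbar wstar k) < qB ->
                   vnorm (vsub (s k.+1) (s k)) < rB ->
                   winf pb rho s wbar zinf k = wB k (dk pb rho wbar wstar k) (s k.+1))
  (HC3 : forall k, vnorm (vsub (wbar k).1 (zinf k)) < delta ->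
                   vnorm (vsub (wbar k.+1).1 (zinf k))
                   <= Cc * Rpower (INR M) (- psi) * vnorm (vsub (wbar k).1 (zinf k)))
  (* the claim, for a fixed k *)
  (k : nat)
  (Hs1 : vnorm (vsub (s k.+1) (s k)) < rA)
  (Hs2 : vnorm (vsub (s k.+1) (s k)) < rB)
  (Hs3 : lamA * lamF * vnorm (vsub (s k.+1) (s k)) < qB * rho)
  (Hw : w_norm pb (w_sub pb (wbar k) (wstar k)) < qB * rho) :
  w_norm pb (w_sub pb (winf pb rho s wbar zinf k) (wstar k.+1))
  <= lamB * lamH / rho *
     (w_norm pb (w_sub pb (wbar k) (wstar k)) + lamA * lamF * vnorm (vsub (s k.+1) (s k))).
Proof.
have wstar_step := wstar_succ_sub_le HsS Hwstar HlamF HrA HlamA HA1 HA2 HA3 Hs1.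
have wstar_near := wstar_succ_near HsS HA1 HA3 Hs1.
have dk_small : mu_norm pb (dual_offset rho (wbar k) (wstar k)) < qB.
  exact: mu_norm_dual_offset_lt.
have dstar_small : mu_norm pb (dual_offset rho (wstar k.+1) (wstar k)) < qB.
  by apply: mu_norm_dual_offset_lt; lra.
have wstar_eq : wstar k.+1 = wB k (dual_offset rho (wstar k.+1) (wstar k)) (s k.+1).
  by apply: (KKT_eq_wB Hrho HB1); rewrite //; lra.
rewrite (HC2 k dk_small Hs2) [X in w_sub _ _ X]wstar_eq.
apply: Rle_trans (wB_sub_le HlamH HlamB HB2 dk_small dstar_small (HsS _) Hs2) _.
rewrite dual_offset_sub mu_norm_dual_offset // /Rdiv (Rmult_assoc (lamB * lamH)).
apply: Rmult_le_compat_l; first nra.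
apply: Rmult_le_compat_l; first by apply/Rlt_le/Rinv_0_lt_compat.
apply: Rle_trans (mu_norm_sub_triangle _ (wstar k).2 _) _.
rewrite (mu_norm_subC (wstar k).2).
have := mu_norm_snd_le_w_norm (w_sub pb (wbar k) (wstar k)).
have := mu_norm_snd_le_w_norm (w_sub pb (wstar k.+1) (wstar k)) => /=; lra.
Qed.
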